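(* Let $n\ge 2$, let $\sigma,\tau\in S_n$ with ${\rm hd}(\sigma,\tau)=d$, and let $m\in\{1,\ldots,n-1\}$. Assume that the disjoint cycle decomposition of $\sigma^{-1}\tau$ has no cycle factor of odd length $\ell$ with $3\le \ell\le 2m+1$. Then ${\rm hd}\big(\sigma^{{\sf CT}^m},\tau^{{\sf CT}^m}\big)\ge d-2m$.
   Context: $S_n$ is the symmetric group on the symbols $\{0,1,\ldots,n-1\}$. Permutations are composed from left to right: for $\sigma,\tau\in S_n$, $\tau\sigma(x):=\sigma(\tau(x))$; in particular $\sigma^{-1}\tau(x)=\tau(\sigma^{-1}(x))$. The Hamming distance of $\sigma,\tau\in S_n$ is ${\rm hd}(\sigma,\tau)=|\{x\in\{0,\ldots,n-1\}:\sigma(x)\neq\tau(x)\}|$. The contraction of $\sigma\in S_n$ is the permutation $\sigma^{\sf CT}\in S_{n-1}$ (on $\{0,\ldots,n-2\}$) defined by $\sigma^{\sf CT}(x)=\sigma(n-1)$ if $x=\sigma^{-1}(n-1)$ and $\sigma^{\sf CT}(x)=\sigma(x)$ otherwise; equivalently, $\sigma^{\sf CT}$ is obtained by deleting the symbol $n-1$ from the disjoint cycle notation of $\sigma$. For $1\le m\le n-1$, the $m$th contraction is defined recursively by $\sigma^{{\sf CT}^1}=\sigma^{\sf CT}$ and $\sigma^{{\sf CT}^m}=(\sigma^{{\sf CT}^{m-1}})^{\sf CT}\in S_{n-m}$ (each contraction removes the currently largest symbol). *)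

From mathcomp Require Import all_boot all_fingroup.
Set Implicit Arguments. Unset Strict Implicit. Unset Printing Implicit Defensive.

(* MathComp's product is left-to-right: (s * t)%g x = t (s x), matching the
   paper's convention, so the paper's sigma^{-1} tau is (s^-1 * t)%g. *)

Local Open Scope group_scope.

Definition hd n (s t : 'S_n) : nat := #|[set x | s x != t x]|.

Section Contraction.
Variable n : nat.
Implicit Type s : 'S_n.+1.

Definition ct_raw s (x : 'I_n) : 'I_n.+1 :=
  let y := s (widen_ord (leqnSn n) x) in
  if y == ord_max then s ord_max else y.

Lemma ct_raw_lt s x : (val (ct_raw s x) < n)%N.
Proof.
rewrite /ct_raw; set w := widen_ord _ x.
case: eqP => [Hy|/eqP Hy].
- have : s ord_max != ord_max.
    apply/eqP => Hm; have : w = ord_max by apply: (@perm_inj _ s); rewrite Hy Hm.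
    by move/(congr1 val) => /=; move=> E; move: (ltn_ord x); rewrite E ltnn.
  move=> /eqP Hn; have := ltn_ord (s ord_max); rewrite ltnS leq_eqVlt.
  by case/orP => // /eqP E; case: Hn; apply: val_inj.
- have := ltn_ord (s w); rewrite ltnS leq_eqVlt.
  by case/orP => // /eqP E; case/eqP: Hy; apply: val_inj.
Qed.

Definition ct_fun s (x : 'I_n) : 'I_n := insubd x (val (ct_raw s x)).

Lemma ct_fun_val s x : val (ct_fun s x) = val (ct_raw s x).
Proof. by rewrite /ct_fun val_insubd ct_raw_lt. Qed.

Lemma ct_fun_inj s : injective (ct_fun s).
Proof.
move=> x y /(congr1 val); rewrite !ct_fun_val => /val_inj.
rewrite /ct_raw.
set wx := widen_ord _ x; set wy := widen_ord _ y.
have wxn : wx != ord_max by rewrite -val_eqE /= neq_ltn ltn_ord.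
have wyn : wy != ord_max by rewrite -val_eqE /= neq_ltn ltn_ord.
have fin : forall a b : 'I_n, widen_ord (leqnSn n) a = widen_ord (leqnSn n) b -> a = b.
  by move=> a b /(congr1 val) /= /val_inj.
case: eqP => Hx; case: eqP => Hy.
- by move=> _; apply: fin; apply: (@perm_inj _ s); rewrite Hx Hy.
- by move/perm_inj => E; rewrite -E eqxx in wyn.
- by move/perm_inj => E; rewrite E eqxx in wxn.
- by move/perm_inj/fin.
Qed.

Definition contract s : 'S_n := perm (@ct_fun_inj s).
End Contraction.

(* m-th contraction: 'S_(m + k) -> 'S_k, removing the largest symbol m times.
   contract_iter m.+1 k s = contract_iter m k (contract s), i.e.
   sigma^{CT^(m+1)} = (sigma^CT)^{CT^m} = (sigma^{CT^m})^CT. *)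
Fixpoint contract_iter (m k : nat) {struct m} : 'S_(m + k) -> 'S_k :=
  match m return 'S_(m + k) -> 'S_k with
  | 0 => fun s => s
  | m'.+1 => fun s => @contract_iter m' k (@contract (m' + k) s)
  end.

From mathcomp Require Import all_boot all_fingroup.
From mathcomp Require Import zify.
Set Implicit Arguments. Unset Strict Implicit. Unset Printing Implicit Defensive.

(* Write pi = sigma^-1 tau, so that hd sigma tau is n minus the number of fixed
   points of pi.  Inside S_n, contracting the largest symbol z amounts to
   replacing sigma by sigma * (z, sigma z) (and tau likewise), which fixes z
   and turns pi into (z, p) pi (z, pi p) with p = sigma z: if pi z <> z, the
   cycle of pi through z and p splits into the fixed point z and two cycles,
   or the cycles through z and through p merge into one cycle plus the fixed
   point z.  The potential "fixed points of pi + cycles of odd length l with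
   3 <= l <= 2a + 1, a the number of their symbols still to be contracted"
   grows by at most 2 at each such step; the odd short cycles are counted
   because a 3-cycle splitting into three fixed points creates three fixed
   points at once.  Under the hypothesis there are no such cycles initially,
   so after m contractions the number of fixed points has grown by at most
   2m. *)

Definition short_odd (l a : nat) : bool := [&& odd l, 3 <= l & l <= 2 * a + 1].

Definition cycle_weight (l a : nat) : nat := (l == 1) + short_odd l a.

Lemma short_odd_monotone l a b : a <= b -> short_odd l a -> short_odd l b.
Proof. by rewrite /short_odd => le_ab /and3P[-> -> ?] /=; lia. Qed.

Lemma cycle_weight_le1 l a : cycle_weight l a <= 1.
Proof. by rewrite /cycle_weight /short_odd; case: l => [|[|l]] //=; case: andP. Qed.

Lemma cycle_weight_split i j a1 a2 :
  1 + cycle_weight i a1 + cycle_weight j a2 <= 2 + cycle_weight (i + j).+1 (a1 + a2).+1.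
Proof.
rewrite /cycle_weight /short_odd /= oddD.
move: (odd_double_half i) (odd_double_half j).
by case: (odd i); case: (odd j) => /= def_i def_j; lia.
Qed.

Lemma eq_iter_order (T : finType) (f : T -> T) x a b :
  a < fingraph.order f x -> b < fingraph.order f x ->
  (iter a f x == iter b f x) = (a == b).
Proof.
move=> lt_a lt_b; apply/eqP/eqP => [eq_ab|-> //].
by rewrite -(findex_iter lt_a) eq_ab findex_iter.
Qed.

Section Potential.
Variable T : finType.
Implicit Types (f g : {perm T}) (B : {set T}) (s : seq T).

Definition orbit_weight f B v : nat :=
  cycle_weight (fingraph.order f v) #|[set y in B | fconnect f v y]|.

Definition potential f B : nat := \sum_(v | froots f v) orbit_weight f B v.

Lemma fpath_traject_eq (h : T -> T) f x n :
  (forall j, j < n -> h (iter j f x) = f (iter j f x)) ->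
  fpath h x (traject f (f x) n).
Proof.
elim: n x => [|n IH] x eq_hf //=.
rewrite (eq_hf 0 (ltn0Sn _)) eqxx /=; apply: IH => j lt_jn.
by rewrite -!iterSr; apply: eq_hf.
Qed.

Lemma fcycle_traject_eq (h : T -> T) f x n :
  (forall j, j < n -> h (iter j f x) = f (iter j f x)) ->
  h (iter n f x) = x -> fcycle h (traject f x n.+1).
Proof.
move=> eq_hf h_last; rewrite trajectS (cycle_path x) /= last_traject h_last eqxx.
exact: fpath_traject_eq.
Qed.

Lemma count_froots_cycle f s : uniq s -> fcycle f s -> count (froots f) s = (s != [::]).
Proof.
case: s => [//|x s'] uniq_s cyc_s; set s := x :: s' in uniq_s cyc_s *.
have root_s v : v \in s -> froot f v = froot f x.
  move=> sv; apply/(rootP (fconnect_sym (@perm_inj _ f))).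
  by rewrite (fconnect_cycle cyc_s sv) mem_head.
rewrite (@eq_in_count _ _ (pred1 (froot f x))) => [|v sv /=]; last first.
  by rewrite /roots root_s // eq_sym.
rewrite count_uniq_mem // -(fconnect_cycle cyc_s (mem_head x s')) /=.
by rewrite connect_root.
Qed.

Lemma sum_orbit_weight_cycle f B s : uniq s -> fcycle f s ->
  \sum_(v <- s | froots f v) orbit_weight f B v = cycle_weight (size s) (count (mem B) s).
Proof.
move=> uniq_s cyc_s.
have weight_s v : (v \in s) && froots f v ->
    orbit_weight f B v = cycle_weight (size s) (count (mem B) s).
  case/andP=> sv _; rewrite /orbit_weight (order_cycle cyc_s) //; congr cycle_weight.
  rewrite -size_filter -(card_uniqP (filter_uniq _ uniq_s)); apply: eq_card => y.
  by rewrite mem_filter !inE (fconnect_cycle cyc_s sv) andbC.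
rewrite big_seq_cond (eq_bigr _ weight_s) -big_seq_cond big_const_seq.
by rewrite count_froots_cycle //; case: (s) => //= *; rewrite addn0.
Qed.

Lemma eq_froots_at f g v : fconnect f v =1 fconnect g v -> froots f v = froots g v.
Proof. by move=> eq_fg; rewrite /roots /root (eq_pick eq_fg). Qed.

Lemma eq_orbit_weight f g B1 B2 v : fconnect f v =1 fconnect g v ->
    (forall y, fconnect f v y -> (y \in B1) = (y \in B2)) ->
  orbit_weight f B1 v = orbit_weight g B2 v.
Proof.
move=> eq_fg eq_B; rewrite /orbit_weight /fingraph.order (eq_card eq_fg).
congr (cycle_weight _ _); apply: eq_card => y; rewrite !inE -eq_fg.
by case fvy: (fconnect f v y); rewrite ?andbF ?andbT ?eq_B.
Qed.

Lemma sum_froots_seq f B s : uniq s ->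
  \sum_(v | froots f v && (v \in s)) orbit_weight f B v =
  \sum_(v <- s | froots f v) orbit_weight f B v.
Proof.
move=> uniq_s; rewrite [RHS]big_mkcond big_uniq // -big_mkcondr /=.
by apply: eq_bigl => v; rewrite andbC.
Qed.

Lemma potential_subset f B1 B2 : B1 \subset B2 -> potential f B1 <= potential f B2.
Proof.
move=> sB12; apply: leq_sum => v _; rewrite leq_add2l.
case: (boolP (short_odd _ _)) => //= /short_odd_monotone -> //.
by apply/subset_leq_card/subsetP => y; rewrite !inE => /andP[/(subsetP sB12) -> ->].
Qed.

Lemma fixed_rootE f v : (f v == v) = froots f v && (fingraph.order f v == 1).
Proof.
apply/eqP/andP => [fv|[_ /eqP ord1]].
  have cyc_v : fcycle f [:: v] by rewrite /cycle /= fv eqxx.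
  have conn_v y : fconnect f v y = (y == v) by rewrite (fconnect_cycle cyc_v) ?inE.
  by rewrite /roots -conn_v connect_root (order_cycle cyc_v) ?inE.
by have := fconnect1 f v; rewrite fconnect_orbit /fingraph.orbit ord1 inE => /eqP.
Qed.

Lemma fixed_froots f v : f v = v -> froots f v.
Proof. by move/eqP; rewrite fixed_rootE => /andP[]. Qed.

Lemma orbit_weight_fixed f B v : f v = v -> orbit_weight f B v = 1.
Proof. by move/eqP; rewrite fixed_rootE => /andP[_ /eqP ord1]; rewrite /orbit_weight ord1. Qed.

Lemma card_fixed_sum f :
  #|[set v | f v == v]| = \sum_(v | froots f v) (fingraph.order f v == 1 : nat).
Proof.
rewrite -sum1_card [LHS]big_mkcond [RHS]big_mkcond; apply: eq_bigr => v _.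
by rewrite inE fixed_rootE; case: (froots f v).
Qed.

Lemma card_fixed_le_potential f B : #|[set v | f v == v]| <= potential f B.
Proof. by rewrite card_fixed_sum; apply: leq_sum => v _; apply: leq_addr. Qed.

Lemma potential_le_card_fixed f B :
    (forall v, ~~ short_odd (fingraph.order f v) #|B|) ->
  potential f B <= #|[set v | f v == v]|.
Proof.
move=> no_short; rewrite card_fixed_sum; apply: leq_sum => v _.
rewrite /orbit_weight /cycle_weight.
case: (boolP (short_odd _ _)) => [|_]; last by rewrite addn0.
move=> /short_odd_monotone short; case/negP: (no_short v); apply: short.
by apply/subset_leq_card/subsetP => y; rewrite inE => /andP[].
Qed.

Lemma eq_fconnect_in (h : T -> T) f v :
  (forall y, fconnect f v y -> h y = f y) -> fconnect h v =1 fconnect f v.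
Proof.
move=> eq_hf; have orbit_v y : fconnect f v y = (y \in fingraph.orbit f v).
  exact: fconnect_orbit.
have cyc_h : fcycle h (fingraph.orbit f v).
  rewrite (@eq_in_cycle _ (fconnect f v) _ (frel f)).
  - exact: cycle_orbit (@perm_inj _ f) v.
  - by move=> x y vx _ /=; rewrite eq_hf.
  - by apply/allP => y; rewrite orbit_v.
by move=> y; rewrite (fconnect_cycle cyc_h (in_orbit f v)) orbit_v.
Qed.

Lemma iter_pred_order f x : iter (fingraph.order f x).-1 f (f x) = x.
Proof. by rewrite -iterSr prednK ?fingraph.order_gt0 // (iter_order (@perm_inj _ f)). Qed.

Lemma card_porbit f x : #|porbit f x| = fingraph.order f x.
Proof.
apply: eq_card => y; apply/porbitP/idP => [[i ->]|xy].
  by rewrite permX inE fconnect_iter.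
by exists (findex f x y); rewrite permX iter_findex.
Qed.

End Potential.

Definition reroute (T : finType) (pi : {perm T}) (z p : T) : {perm T} :=
  (tperm z p * pi * tperm z (pi p))%g.

Section Reroute.
Variables (T : finType) (pi : {perm T}) (z p : T).
Local Notation pi' := (reroute pi z p).
Local Notation l := (fingraph.order pi z).

Lemma rerouteE v : pi' v = tperm z (pi p) (pi (tperm z p v)).
Proof. by rewrite !permM. Qed.

Lemma reroute_z : pi' z = z.
Proof. by rewrite rerouteE tpermL tpermR. Qed.

Lemma reroute_fixed : pi z = z -> pi' = pi.
Proof.
move=> pz; apply/permP => v; rewrite rerouteE.
case: (tpermP z p v) => [->|->|/eqP vz /eqP vp]; first by rewrite tpermR.
  by rewrite pz tpermL.
have zv : z != pi v by rewrite -{1}pz (inj_eq (@perm_inj _ pi)) eq_sym.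
by rewrite tpermD // (inj_eq (@perm_inj _ pi)) eq_sym.
Qed.

Lemma reroute_eq v : v != z -> v != p -> pi v != z -> pi' v = pi v.
Proof.
move=> vz vp pvz; have pvp : pi p != pi v by rewrite (inj_eq (@perm_inj _ pi)) eq_sym.
by rewrite rerouteE !tpermD // eq_sym.
Qed.

Lemma reroute_p : z != p -> pi z != z -> pi' p = pi z.
Proof.
move=> zp pz; have pzp : pi p != pi z by rewrite (inj_eq (@perm_inj _ pi)) eq_sym.
by rewrite rerouteE tpermR tpermD // eq_sym.
Qed.

Lemma reroute_last v : v != z -> v != p -> pi v = z -> pi' v = pi p.
Proof. by move=> vz vp pvz; rewrite rerouteE (@tpermD _ z p v) 1?eq_sym // pvz tpermL. Qed.

Lemma iter_neq_z a : 0 < a < l -> iter a pi z != z.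
Proof.
by case/andP=> a_gt0 a_lt; rewrite -[X in _ != X]/(iter 0 pi z) eq_iter_order // -lt0n.
Qed.

Lemma reroute_iter a : 0 < a -> a.+1 < l -> iter a pi z != p ->
  pi' (iter a pi z) = pi (iter a pi z).
Proof.
move=> a_gt0 a_lt ap.
by rewrite reroute_eq // -?iterS iter_neq_z // a_gt0 ltnW.
Qed.

Lemma reroute_iter_last : 1 < l -> iter l.-1 pi z != p -> pi' (iter l.-1 pi z) = pi p.
Proof.
move=> l_gt1 last_p; have l_bd : 0 < l.-1 < l by rewrite -subn1; lia.
by rewrite reroute_last ?iter_neq_z // -iterS iterSr iter_pred_order.
Qed.

Lemma orbit_merge_perm : perm_eq (fingraph.orbit pi z ++ fingraph.orbit pi p)
  (z :: traject pi (pi z) l.-1 ++ traject pi (pi p) (fingraph.order pi p)).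
Proof.
rewrite /fingraph.orbit -(prednK (fingraph.order_gt0 pi z)) trajectS /= perm_cons.
rewrite -(prednK (fingraph.order_gt0 pi p)) trajectS trajectSr iter_pred_order perm_cat2l.
by rewrite perm_sym perm_rcons.
Qed.

Hypothesis pz : pi z != z.

Lemma order_gt1 : 1 < l.
Proof.
have := iter_order (@perm_inj _ pi) z; have := fingraph.order_gt0 pi z.
by case: (l) => [|[|n]] //= _ pz1; move: pz; rewrite pz1 eqxx.
Qed.

Section SameCycle.
Hypothesis zp : fconnect pi z p.
Local Notation i := (findex pi z p).
Let i_lt : i < l := findex_max zp.
Let iter_i : iter i pi z = p := iter_findex zp.

Lemma reroute_cycle_left : fcycle pi' (traject pi (pi z) i).
Proof.
move: i_lt iter_i; case: i => [//|i'] lt_i iter_i'.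
apply: fcycle_traject_eq => [j lt_j|]; last first.
  by rewrite -iterSr iter_i' reroute_p // -iter_i' eq_sym iter_neq_z.
by rewrite -iterSr reroute_iter // ?ltnS -?iter_i' ?eq_iter_order //; lia.
Qed.

Lemma reroute_cycle_right : fcycle pi' (traject pi (pi p) (l - i.+1)).
Proof.
have shift j : iter j pi (pi p) = iter (j + i.+1) pi z by rewrite iterD iterS iter_i.
have := i_lt; case E: (l - i.+1) => [//|j'] _.
apply: fcycle_traject_eq => [j lt_j|]; last first.
  rewrite shift (_ : j' + i.+1 = l.-1); last by rewrite -subn1; lia.
  rewrite reroute_iter_last ?order_gt1 //.
  by rewrite -[X in _ != X]iter_i eq_iter_order //; rewrite -subn1; lia.
rewrite shift reroute_iter //; try lia.
by rewrite -[X in _ != X]iter_i eq_iter_order //; lia.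
Qed.

Lemma orbit_split :
  fingraph.orbit pi z = z :: traject pi (pi z) i ++ traject pi (pi p) (l - i.+1).
Proof.
rewrite /fingraph.orbit {1}(_ : l = (i + (l - i.+1)).+1); last by lia.
by rewrite trajectS trajectD -iterSr iterS iter_i.
Qed.

End SameCycle.

Section DisjointCycles.
Hypothesis zp : ~~ fconnect pi z p.
Local Notation lp := (fingraph.order pi p).

Let off_z y : fconnect pi p y -> y != z.
Proof.
by move=> py; apply: contraNneq zp => yz; rewrite (fconnect_sym (@perm_inj _ pi)) -yz.
Qed.

Lemma reroute_cycle_merge : fcycle pi' (traject pi (pi z) l.-1 ++ traject pi (pi p) lp).
Proof.
have zp' : z != p by apply: contraNneq zp => <-; apply: connect0.
have z_off a : iter a pi z != p by apply: contraNneq zp => <-; apply: fconnect_iter.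
have [l' El] : exists l', l.-1 = l'.+1 by move: order_gt1; case: (l) => [|[|n]] //; exists n.
rewrite El trajectS /= rcons_cat cat_path; apply/andP; split.
  apply: fpath_traject_eq => j lt_j; rewrite -iterSr reroute_iter //; lia.
rewrite last_traject -iterSr -El -(prednK (fingraph.order_gt0 pi p)) trajectS /=.
rewrite reroute_iter_last ?order_gt1 // eqxx rcons_path /=; apply/andP; split.
  apply: fpath_traject_eq => j lt_j.
  rewrite -iterSr reroute_eq ?off_z -?iterS ?fconnect_iter //.
  by rewrite -[X in _ != X]/(iter 0 pi p) eq_iter_order //; move: lt_j; rewrite -subn1; lia.
by rewrite last_traject iter_pred_order reroute_p.
Qed.

End DisjointCycles.

End Reroute.

Section ReroutePotential.
Variables (T : finType) (pi : {perm T}) (z p : T) (B : {set T}).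
Hypothesis zB : z \in B.
Local Notation pi' := (reroute pi z p).
Local Notation touched v := (fconnect pi z v || fconnect pi p v).
Let pi_sym x y : fconnect pi x y = fconnect pi y x := fconnect_sym (@perm_inj _ pi) x y.

Lemma sum_reroute_untouched :
  \sum_(v | froots pi' v && ~~ touched v) orbit_weight pi' (B :\ z) v =
  \sum_(v | froots pi v && ~~ touched v) orbit_weight pi B v.
Proof.
have eq_conn v : ~~ touched v -> fconnect pi' v =1 fconnect pi v.
  rewrite negb_or => /andP[zv pv]; apply: eq_fconnect_in => y vy.
  have vpy : fconnect pi v (pi y) := connect_trans vy (fconnect1 pi y).
  by apply: reroute_eq; [move: vy | move: vy | move: vpy];
    apply: contraTneq => ->; rewrite pi_sym.
apply: eq_big => [v | v /andP[_ untouched_v]].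
  by case: (boolP (touched v)) => [|t]; rewrite ?andbF // (eq_froots_at (eq_conn v t)).
apply: eq_orbit_weight (eq_conn v untouched_v) _ => y; rewrite eq_conn // => vy.
rewrite !inE andb_idl // => _; apply: contraNneq untouched_v => yz.
by rewrite pi_sym -yz vy.
Qed.

Let count_setD1 c : z \notin c -> count (mem (B :\ z)) c = count (mem B) c.
Proof.
move=> zc; apply: eq_in_count => v vc /=; rewrite !inE andb_idl // => _.
by apply: contraNneq zc => <-.
Qed.

Section Touched.
Hypothesis pz : pi z != z.

Lemma sum_reroute_split : fconnect pi z p ->
  \sum_(v | froots pi' v && touched v) orbit_weight pi' (B :\ z) v <=
  \sum_(v | froots pi v && touched v) orbit_weight pi B v + 2.
Proof.
move=> zp; have touchedE v : touched v = (v \in fingraph.orbit pi z).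
  rewrite -fconnect_orbit; apply/orP/idP => [[//|pv]|->]; last by left.
  exact: connect_trans zp pv.
under eq_bigl do rewrite touchedE.
under [X in _ <= X + _]eq_bigl do rewrite touchedE.
have uniq_o := orbit_uniq pi z.
rewrite !sum_froots_seq // [in X in _ <= X + _]sum_orbit_weight_cycle //; last first.
  exact: cycle_orbit (@perm_inj _ pi) z.
move: uniq_o; rewrite (orbit_split pz zp) => /= /andP[z_notin].
rewrite cat_uniq => /and3P[uniq_l _ uniq_r].
rewrite big_cons fixed_froots ?reroute_z // orbit_weight_fixed ?reroute_z // big_cat /=.
rewrite !sum_orbit_weight_cycle ?reroute_cycle_left ?reroute_cycle_right //.
rewrite zB count_cat !count_setD1; last 2 first.
- by apply: contra z_notin; rewrite mem_cat => ->; rewrite orbT.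
- by apply: contra z_notin; rewrite mem_cat => ->.
by rewrite size_cat [true + _]add1n addnA [X in _ <= X]addnC cycle_weight_split.
Qed.

Lemma sum_reroute_merge : ~~ fconnect pi z p ->
  \sum_(v | froots pi' v && touched v) orbit_weight pi' (B :\ z) v <= 2.
Proof.
move=> zp; pose c := traject pi (pi z) (fingraph.order pi z).-1 ++
                     traject pi (pi p) (fingraph.order pi p).
have merge_perm : perm_eq (fingraph.orbit pi z ++ fingraph.orbit pi p) (z :: c).
  exact: orbit_merge_perm.
have uniq_zc : uniq (z :: c).
  rewrite -(perm_uniq merge_perm) cat_uniq !orbit_uniq andbT /=.
  apply/hasPn => y; rewrite -!fconnect_orbit => py; apply: contra zp => zy.
  by apply: connect_trans zy _; rewrite pi_sym.
under eq_bigl do rewrite !fconnect_orbit -mem_cat (perm_mem merge_perm).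
rewrite sum_froots_seq // big_cons fixed_froots ?reroute_z // orbit_weight_fixed ?reroute_z //.
case/andP: uniq_zc => _ uniq_c.
by rewrite sum_orbit_weight_cycle ?reroute_cycle_merge // ltnS cycle_weight_le1.
Qed.

End Touched.

Lemma potential_reroute : potential pi' (B :\ z) <= potential pi B + 2.
Proof.
have [pz|pz] := eqVneq (pi z) z.
  by rewrite reroute_fixed // (leq_trans (potential_subset _ (subD1set B z))) ?leq_addr.
rewrite /potential (bigID (fun v => touched v)) [X in _ <= X + _](bigID (fun v => touched v)).
rewrite /= sum_reroute_untouched addnAC leq_add2r.
have [zp|zp] := boolP (fconnect pi z p); first exact: sum_reroute_split.
exact: leq_trans (sum_reroute_merge pz zp) (leq_addl _ _).
Qed.

End ReroutePotential.

(* [detach_top j s] performs the first j contractions inside S_N: the symbols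
   N - 1, ..., N - j become fixed points (see contract_iterE). *)
Section Detach.
Variable N : nat.
Implicit Types (s t : 'S_N) (x z : 'I_N).

Definition detach z s : 'S_N := (s * tperm z (s z))%g.

Definition detach_nat (i : nat) s : 'S_N := if insub i is Some z then detach z s else s.

Fixpoint detach_top (j : nat) s : 'S_N :=
  if j is j'.+1 then detach_nat (N - j) (detach_top j' s) else s.

Lemma detachE z s x : detach z s x = tperm z (s z) (s x).
Proof. by rewrite permM. Qed.

Lemma detach_fix z s x : s x = x -> detach z s x = x.
Proof.
move=> sx; rewrite detachE sx; case: tpermP => // [xz|xsz]; first by rewrite -xz.
by rewrite -[X in X = _]sx in xsz; rewrite (perm_inj xsz).
Qed.

Lemma detach_reroute z s t :
  ((detach z s)^-1 * detach z t)%g = reroute (s^-1 * t) z (s z).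
Proof. by rewrite /detach /reroute permM permK invMg tpermV !mulgA. Qed.

Lemma detach_top_fix j s x : j <= N -> N - j <= x -> detach_top j s x = x.
Proof.
elim: j => [|j IH] le_j le_x /=; first by have := ltn_ord x; lia.
rewrite /detach_nat; case: insubP => [z _ /= val_z|]; last by lia.
have [->|xz] := eqVneq x z; first by rewrite detachE tpermR.
apply: detach_fix; apply: IH; first lia.
by move: xz; rewrite -val_eqE /= val_z; lia.
Qed.

Variable k : nat.

Definition pending j := [set x : 'I_N | k <= x < N - j].

Lemma potential_detach_top j s t : j <= N - k ->
  potential ((detach_top j s)^-1 * detach_top j t) (pending j) <=
  potential (s^-1 * t) (pending 0) + j.*2.
Proof.
elim: j => [|j IH] le_j; first by rewrite addn0.
rewrite /= /detach_nat; case: insubP => [z _ /= val_z|]; last by lia.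
have zA : z \in pending j by rewrite inE val_z; lia.
have -> : pending j.+1 = pending j :\ z.
  by apply/setP => x; rewrite !inE -val_eqE /= val_z; lia.
rewrite detach_reroute; apply: leq_trans (potential_reroute _ _ zA) _.
by rewrite doubleS -[j.*2.+2]addn2 addnA leq_add2r IH // ltnW.
Qed.

End Detach.

Lemma widen_ord_inj n m (le_nm : n <= m) : injective (widen_ord le_nm).
Proof. by move=> a b /(congr1 val) /= /val_inj. Qed.

Lemma contractE n (s : 'S_n.+1) x :
  widen_ord (leqnSn n) (contract s x) = detach ord_max s (widen_ord (leqnSn n) x).
Proof.
apply: val_inj; rewrite /contract permE /= ct_fun_val /ct_raw detachE.
case: tpermP => [->|/perm_inj xmax|/eqP/negPf ->] //; first by rewrite eqxx.
by have := ltn_ord x; rewrite -[X in X < _]/(val (widen_ord (leqnSn n) x)) xmax ltnn.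
Qed.

Lemma detach_nat_widen n (r : 'S_n) (rho : 'S_n.+1) i : i < n ->
  (forall y, rho (widen_ord (leqnSn n) y) = widen_ord (leqnSn n) (r y)) ->
  forall y, detach_nat i rho (widen_ord (leqnSn n) y) =
            widen_ord (leqnSn n) (detach_nat i r y).
Proof.
move=> lt_i ext y; rewrite /detach_nat.
case: insubP => [z _ val_z|]; last by rewrite ltnS ltnW.
case: insubP => [z' _ val_z'|]; last by rewrite lt_i.
have -> : z = widen_ord (leqnSn n) z' by apply: val_inj; rewrite /= val_z val_z'.
by rewrite !detachE !ext (inj_tperm _ _ _ (@widen_ord_inj _ _ _)).
Qed.

Lemma detach_top_contract n (s : 'S_n.+1) j y :
  detach_top j.+1 s (widen_ord (leqnSn n) y) =
  widen_ord (leqnSn n) (detach_top j (contract s) y).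
Proof.
elim: j y => [|j IH] y.
  rewrite /= /detach_nat; case: insubP => [z _ val_z|]; last by rewrite subn1 /= ltnSn.
  have -> : z = ord_max by apply: val_inj; rewrite val_z subn1.
  by rewrite contractE.
case: n s IH y => [|n] s IH y; first by case: y.
have -> : detach_top j.+2 s = detach_nat (n.+1 - j.+1) (detach_top j.+1 s) by [].
by apply: (detach_nat_widen _ IH); lia.
Qed.

Lemma contract_iterE m k (s : 'S_(m + k)) x :
  detach_top m s (widen_ord (leq_addl m k) x) =
  widen_ord (leq_addl m k) (@contract_iter m k s x).
Proof.
elim: m => [|m IH] in s x *.
  by apply: val_inj => /=; congr (val (s _)); apply: val_inj.
have -> : widen_ord (leq_addl m.+1 k) x = widen_ord (leqnSn _) (widen_ord (leq_addl m k) x).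
  exact: val_inj.
by rewrite detach_top_contract IH; apply: val_inj.
Qed.

Lemma hd_contract_iter m k (s t : 'S_(m + k)) :
  hd (@contract_iter m k s) (@contract_iter m k t) = hd (detach_top m s) (detach_top m t).
Proof.
rewrite /hd -(card_imset _ (@widen_ord_inj _ _ (leq_addl m k))).
apply: eq_card => x; rewrite inE; apply/imsetP/idP => [[y]|neq_x].
  by rewrite inE => neq_y ->; rewrite !contract_iterE (inj_eq (@widen_ord_inj _ _ _)).
have lt_xk : x < k.
  rewrite ltnNge; apply: contra neq_x => le_kx.
  have fix_top u : detach_top m u x = x by rewrite detach_top_fix ?leq_addr ?addKn.
  by rewrite !fix_top.
have wx : widen_ord (leq_addl m k) (Ordinal lt_xk) = x by apply: val_inj.
exists (Ordinal lt_xk) => //.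
by rewrite inE -(inj_eq (@widen_ord_inj _ _ (leq_addl m k))) -!contract_iterE wx.
Qed.

Lemma card_fixed_add_hd n (s t : 'S_n) : #|[set v | (s^-1 * t)%g v == v]| + hd s t = n.
Proof.
have -> : [set v | (s^-1 * t)%g v == v] = s @: [set x | s x == t x].
  apply/setP => v; rewrite inE; apply/idP/imsetP => [fix_v|[x sx ->]].
    by exists (s^-1%g v); rewrite ?permKV // inE permKV eq_sym -permM.
  by move: sx; rewrite inE permM permK eq_sym.
rewrite card_imset; last exact: perm_inj.
rewrite /hd -[RHS]card_ord -(cardsC [set x | s x == t x]); congr (_ + _).
by apply: eq_card => x; rewrite !inE.
Qed.

Lemma card_pending0 m k : #|pending (m + k) k 0| <= m.
Proof.
have low : widen_ord (leq_addl m k) @: [set: 'I_k] \subset ~: pending (m + k) k 0.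
  by apply/subsetP => _ /imsetP[x _ ->]; rewrite !inE /= leqNgt ltn_ord.
have := subset_leq_card low; rewrite card_imset ?cardsT ?card_ord; last exact: widen_ord_inj.
by have := cardsC (pending (m + k) k 0); rewrite card_ord; lia.
Qed.

Theorem theorem5p2 (m k : nat) (hm : (1 <= m)%N) (hk : (1 <= k)%N)
  (sigma tau : 'S_(m + k)) (d : nat) :
  hd sigma tau = d ->
  (forall x : 'I_(m + k),
     let l := #|porbit (sigma^-1 * tau)%g x| in
     ~~ [&& odd l, (3 <= l)%N & (l <= 2 * m + 1)%N]) ->
  (d - 2 * m <= hd (@contract_iter m k sigma) (@contract_iter m k tau))%N.
Proof.
move=> <- no_short_odd.
have start : potential (sigma^-1 * tau) (pending (m + k) k 0) <=
             #|[set v | (sigma^-1 * tau)%g v == v]|.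
  apply: potential_le_card_fixed => v; apply: contra (no_short_odd v).
  by move/(short_odd_monotone (card_pending0 m k)); rewrite /short_odd card_porbit.
have steps := potential_detach_top sigma tau (eq_leq (esym (addnK k m))).
have finish := card_fixed_le_potential
  ((detach_top m sigma)^-1 * detach_top m tau) (pending (m + k) k m).
have := card_fixed_add_hd sigma tau.
have := card_fixed_add_hd (detach_top m sigma) (detach_top m tau).
rewrite hd_contract_iter -mul2n in steps *; lia.
Qed.
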